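(* Suppose Assumption A1 holds and $F^*>-\infty$. Then Algorithm (1-RCD), with indices $i_k$ drawn i.i.d. from the uniform distribution on $\{1,\dots,N\}$, generates a sequence $x^k$ satisfying, for all $k\ge0$, $$\min_{0\le l\le k} E\left[\left(M_1(x^l,L)\right)^2\right]\le \frac{2N\,(F(x^0)-F^* )}{k+1},$$ where the expectation is over the random index choices.
   Context: Block structure: $n=\sum_{i=1}^N n_i$, $I_n=[U_1\ \dots\ U_N]$ with $U_i\in\mathbb{R}^{n\times n_i}$, $x_i=U_i^Tx$, $\nabla_i f(x)=U_i^T\nabla f(x)$. Problem: $F^*=\min_{x\in\mathbb{R}^n}F(x):=f(x)+h(x)$. Assumption A1: (i) $f$ is differentiable and there are constants $L_i>0$ with $\|\nabla_i f(x+U_is_i)-\nabla_i f(x)\|\le L_i\|s_i\|$ for all $s_i\in\mathbb{R}^{n_i}$, $x\in\mathbb{R}^n$, $i=1,\dots,N$; (ii) $h$ is proper, convex, continuous and block separable, $h(x)=\sum_{i=1}^N h_i(x_i)$ with each $h_i:\mathbb{R}^{n_i}\to\mathbb{R}$ convex. $L=[L_1\dots L_N]^T$. Algorithm (1-RCD): given $x^0\in\mathbb{R}^n$, for $k\ge0$ choose an index $i_k\in\{1,\dots,N\}$ at random (i.i.d. across iterations), compute $d_{i_k}=\arg\min_{s\in\mathbb{R}^{n_{i_k}}}\ f(x^k)+\langle\nabla_{i_k}f(x^k),s\rangle+\frac{L_{i_k}}{2}\|s\|^2+h(x^k+U_{i_k}s)$, and set $x^{k+1}=x^k+U_{i_k}d_{i_k}$.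 Notation: $\|x\|_L=(\sum_i L_i\|x_i\|^2)^{1/2}$, $\|y\|_L^*=(\sum_i L_i^{-1}\|y_i\|^2)^{1/2}$, $D_L=\mathrm{diag}(L_1I_{n_1},\dots,L_NI_{n_N})$, $d_L(x)=\arg\min_{s\in\mathbb{R}^n} f(x)+\langle\nabla f(x),s\rangle+\frac12\|s\|_L^2+h(x+s)$, $M_1(x,L)=\|D_L d_L(x)\|_L^*$. *)

From Stdlib Require Import Reals Lra Lia List.
Open Scope R_scope.

(* A point of R^n = R^{n_1} x ... x R^{n_N} is represented in block form:
   x i j is the j-th coordinate of block x_i (0-based: i < N, j < nb i).
   Values outside this range are irrelevant. *)
Definition Vec := nat -> nat -> R.
Definition BVec := nat -> R.

Fixpoint fsum (n : nat) (f : nat -> R) : R :=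
  match n with O => 0 | S m => fsum m f + f m end.

Definition bnorm2 (m : nat) (s : BVec) : R := fsum m (fun j => s j ^ 2).
Definition bnorm (m : nat) (s : BVec) : R := sqrt (bnorm2 m s).
Definition binner (m : nat) (u v : BVec) : R := fsum m (fun j => u j * v j).

Definition inner (N : nat) (nb : nat -> nat) (x y : Vec) : R :=
  fsum N (fun i => binner (nb i) (x i) (y i)).
Definition vnorm (N : nat) (nb : nat -> nat) (x : Vec) : R :=
  sqrt (fsum N (fun i => bnorm2 (nb i) (x i))).

Definition vadd (x y : Vec) : Vec := fun i j => x i j + y i j.
Definition bsub (u v : BVec) : BVec := fun j => u j - v j.
Definition bcomb (t : R) (u v : BVec) : BVec := fun j => t * u j + (1 - t) * v j.

Definition upd (nb : nat -> nat) (x : Vec) (i : nat) (s : BVec) : Vec :=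
  fun i' j => if andb (Nat.eqb i' i) (Nat.ltb j (nb i)) then x i' j + s j else x i' j.

Definition has_gradient (N : nat) (nb : nat -> nat) (f : Vec -> R) (g : Vec -> Vec) : Prop :=
  forall x eps, 0 < eps -> exists delta, 0 < delta /\
    forall h, vnorm N nb h < delta ->
      Rabs (f (vadd x h) - f x - inner N nb (g x) h) <= eps * vnorm N nb h.

(* Assumption A1 (i): block-coordinatewise Lipschitz gradient *)
Definition block_lipschitz (N : nat) (nb : nat -> nat) (g : Vec -> Vec) (L : nat -> R) : Prop :=
  forall i x s, (i < N)%nat ->
    bnorm (nb i) (bsub (g (upd nb x i s) i) (g x i)) <= L i * bnorm (nb i) s.

(* hi : R^{m} -> R is a function of R^m (depends only on coordinates < m) *)
Definition block_fun (m : nat) (hi : BVec -> R) : Prop :=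
  forall u v, (forall j, (j < m)%nat -> u j = v j) -> hi u = hi v.

Definition convex_on (m : nat) (hi : BVec -> R) : Prop :=
  forall u v t, 0 <= t <= 1 -> hi (bcomb t u v) <= t * hi u + (1 - t) * hi v.

Definition continuous_on (m : nat) (hi : BVec -> R) : Prop :=
  forall u eps, 0 < eps -> exists delta, 0 < delta /\
    forall v, bnorm m (bsub v u) < delta -> Rabs (hi v - hi u) < eps.

Definition hsum (N : nat) (hb : nat -> BVec -> R) (x : Vec) : R :=
  fsum N (fun i => hb i (x i)).

(* Model minimized at iteration k for block i *)
Definition block_model (nb : nat -> nat) (f : Vec -> R) (g : Vec -> Vec)
  (h : Vec -> R) (L : nat -> R) (x : Vec) (i : nat) (s : BVec) : R :=
  f x + binner (nb i) (g x i) s + L i / 2 * bnorm2 (nb i) s + h (upd nb x i s).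

Definition Lnorm2 (N : nat) (nb : nat -> nat) (L : nat -> R) (s : Vec) : R :=
  fsum N (fun i => L i * bnorm2 (nb i) (s i)).

(* full model defining d_L(x) *)
Definition full_model (N : nat) (nb : nat -> nat) (f : Vec -> R) (g : Vec -> Vec)
  (h : Vec -> R) (L : nat -> R) (x s : Vec) : R :=
  f x + inner N nb (g x) s + / 2 * Lnorm2 N nb L s + h (vadd x s).

Definition Ldualnorm (N : nat) (nb : nat -> nat) (L : nat -> R) (y : Vec) : R :=
  sqrt (fsum N (fun i => / L i * bnorm2 (nb i) (y i))).

Definition DL (L : nat -> R) (d : Vec) : Vec := fun i j => L i * d i j.

Definition M1 (N : nat) (nb : nat -> nat) (L : nat -> R) (dL : Vec -> Vec) (x : Vec) : R :=
  Ldualnorm N nb L (DL L (dL x)).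

(* Run of 1-RCD along the index list i_0, i_1, ..., using block step D *)
Fixpoint rcd_run (nb : nat -> nat) (D : Vec -> nat -> BVec) (x : Vec) (w : list nat) : Vec :=
  match w with
  | nil => x
  | i :: r => rcd_run nb D (upd nb x i (D x i)) r
  end.

(* Expectation of G(i_0,...,i_{l-1}) for i.i.d. indices uniform on {0,...,N-1} *)
Fixpoint expect_unif (N : nat) (l : nat) (G : list nat -> R) : R :=
  match l with
  | O => G nil
  | S m => / INR N * fsum N (fun i => expect_unif N m (fun r => G (i :: r)))
  end.

(* Write F = f + h.  The proof has three ingredients.
   1. Block descent: by the mean value theorem along the line t |-> x + t U_i s,
      block Lipschitz continuity of the gradient gives
      f(x + U_i s) <= f(x) + <grad_i f(x), s> + L_i/2 ||s||^2.  Hence one step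
      of 1-RCD along block i decreases F at least as much as the block model,
      evaluated at the i-th block of any competitor s.
   2. Optimality of d = d_L(x): comparing the full model at d and at t d for
      t in [0,1] (convexity of h) yields <grad f(x), d> + h(x+d) - h(x) <= -||d||_L^2.
      Taking s = d_i in 1. and averaging over i then gives
      (1/N) sum_i F(x + U_i D_i(x)) <= F(x) - M_1(x,L)^2 / (2N).
   3. Expectations: this one-step inequality propagates through the
      uniform expectation over index sequences, and a telescoping sum with
      F >= F^* bounds the smallest expected value of M_1^2 by the average. *)

From Stdlib Require Import Reals Lra Lia FunctionalExtensionality.
Open Scope R_scope.

Lemma fsum_ext n f g : (forall i, (i < n)%nat -> f i = g i) -> fsum n f = fsum n g.
Proof.
  induction n as [|n IH]; simpl; intros Hfg; auto.
  rewrite IH by (intros; apply Hfg; lia). rewrite Hfg by lia. reflexivity.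
Qed.

Lemma fsum_le n f g : (forall i, (i < n)%nat -> f i <= g i) -> fsum n f <= fsum n g.
Proof.
  induction n as [|n IH]; simpl; intros Hfg; [lra|].
  assert (f n <= g n) by (apply Hfg; lia).
  assert (fsum n f <= fsum n g) by (apply IH; intros; apply Hfg; lia).
  lra.
Qed.

Lemma fsum_plus n f g : fsum n (fun i => f i + g i) = fsum n f + fsum n g.
Proof. induction n as [|n IH]; simpl; [lra|]. rewrite IH; lra. Qed.

Lemma fsum_minus n f g : fsum n (fun i => f i - g i) = fsum n f - fsum n g.
Proof. induction n as [|n IH]; simpl; [lra|]. rewrite IH; lra. Qed.

Lemma fsum_scal n c f : fsum n (fun i => c * f i) = c * fsum n f.
Proof. induction n as [|n IH]; simpl; [lra|]. rewrite IH; lra. Qed.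

Lemma fsum_div n f c : fsum n (fun i => f i / c) = fsum n f / c.
Proof. induction n as [|n IH]; simpl; [unfold Rdiv; ring|]. rewrite IH; unfold Rdiv; ring. Qed.

Lemma fsum_const n c : fsum n (fun _ => c) = INR n * c.
Proof. induction n as [|n IH]; simpl fsum; [simpl; lra|]. rewrite IH, S_INR; lra. Qed.

Lemma fsum_zero n f : (forall i, (i < n)%nat -> f i = 0) -> fsum n f = 0.
Proof. intros Hf. rewrite (fsum_ext _ _ (fun _ => 0)), fsum_const by auto. ring. Qed.

Lemma fsum_nonneg n f : (forall i, (i < n)%nat -> 0 <= f i) -> 0 <= fsum n f.
Proof.
  intros Hf. rewrite <- (Rmult_0_r (INR n)), <- fsum_const. apply fsum_le; auto.
Qed.

Lemma fsum_update n f g i : (i < n)%nat ->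
  (forall j, (j < n)%nat -> j <> i -> f j = g j) -> fsum n f = fsum n g - g i + f i.
Proof.
  induction n as [|n IH]; simpl; intros Hi Hfg; [lia|].
  destruct (Nat.eq_dec n i) as [->|Hni].
  - rewrite (fsum_ext i f g) by (intros; apply Hfg; lia). ring.
  - rewrite IH by (lia || (intros; apply Hfg; lia)). rewrite (Hfg n) by lia. ring.
Qed.

Lemma fsum_only n f i : (i < n)%nat ->
  (forall j, (j < n)%nat -> j <> i -> f j = 0) -> fsum n f = f i.
Proof.
  intros Hi Hf. rewrite (fsum_update n f (fun _ => 0) i), fsum_const by auto. ring.
Qed.

Lemma bnorm2_nonneg m s : 0 <= bnorm2 m s.
Proof. apply fsum_nonneg. intros. apply pow2_ge_0. Qed.

Lemma bnorm2_scal m c s : bnorm2 m (fun j => c * s j) = c ^ 2 * bnorm2 m s.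
Proof. unfold bnorm2. rewrite <- fsum_scal. apply fsum_ext. intros. ring. Qed.

Lemma bnorm_scal m c s : bnorm m (fun j => c * s j) = Rabs c * bnorm m s.
Proof.
  unfold bnorm. rewrite bnorm2_scal, sqrt_mult_alt by apply pow2_ge_0.
  rewrite <- sqrt_Rsqr_abs. unfold Rsqr. do 2 f_equal. ring.
Qed.

Lemma binner_young m u v lam : 0 < lam ->
  binner m u v <= / (2 * lam) * bnorm2 m u + lam / 2 * bnorm2 m v.
Proof.
  intros Hlam. unfold binner, bnorm2. rewrite <- !fsum_scal, <- fsum_plus.
  apply fsum_le. intros j _.
  assert (Hsq : 0 <= (u j - lam * v j) ^ 2) by apply pow2_ge_0.
  apply (Rmult_le_reg_r (2 * lam)); [lra|].
  replace ((/ (2 * lam) * u j ^ 2 + lam / 2 * v j ^ 2) * (2 * lam))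
    with (u j ^ 2 + lam ^ 2 * v j ^ 2) by (field; lra).
  nra.
Qed.

(* If ||w|| <= K ||s|| then <w,s> <= K ||s||^2 (Young with lam = K). *)
Lemma binner_le_of_bnorm_le m w s K : 0 < K ->
  bnorm m w <= K * bnorm m s -> binner m w s <= K * bnorm2 m s.
Proof.
  intros HK Hws.
  assert (Hw2 : bnorm2 m w <= K ^ 2 * bnorm2 m s).
  { unfold bnorm in Hws.
    rewrite <- (pow2_sqrt (bnorm2 m w)), <- (pow2_sqrt (bnorm2 m s)) by apply bnorm2_nonneg.
    rewrite <- Rpow_mult_distr. apply pow_incr. split; [apply sqrt_pos | exact Hws]. }
  eapply Rle_trans; [apply (binner_young m w s K HK)|].
  assert (0 <= / (2 * K)) by (left; apply Rinv_0_lt_compat; lra).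
  apply Rle_trans with (/ (2 * K) * (K ^ 2 * bnorm2 m s) + K / 2 * bnorm2 m s).
  - apply Rplus_le_compat_r, Rmult_le_compat_l; auto.
  - right. field. lra.
Qed.

Definition embed (nb : nat -> nat) (i : nat) (s : BVec) (u : R) : Vec :=
  fun i' j => if andb (Nat.eqb i' i) (Nat.ltb j (nb i)) then u * s j else 0.

Definition block_line (nb : nat -> nat) (x : Vec) (i : nat) (s : BVec) (t : R) : Vec :=
  upd nb x i (fun j => t * s j).

Lemma block_line_shift nb x i s t u :
  vadd (block_line nb x i s t) (embed nb i s u) = block_line nb x i s (t + u).
Proof.
  unfold vadd, block_line, upd, embed.
  do 2 (apply functional_extensionality; intro). destruct (andb _ _); ring.
Qed.

Lemma block_line_0 nb x i s : block_line nb x i s 0 = x.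
Proof.
  unfold block_line, upd.
  do 2 (apply functional_extensionality; intro). destruct (andb _ _); ring.
Qed.

Lemma block_line_1 nb x i s : block_line nb x i s 1 = upd nb x i s.
Proof.
  unfold block_line, upd.
  do 2 (apply functional_extensionality; intro). destruct (andb _ _); ring.
Qed.

Lemma embed_block nb i s u (G : nat -> R -> R) :
  fsum (nb i) (fun j => G j (embed nb i s u i j)) = fsum (nb i) (fun j => G j (u * s j)).
Proof.
  apply fsum_ext. intros j Hj. unfold embed.
  rewrite Nat.eqb_refl, (proj2 (Nat.ltb_lt j (nb i)) Hj). reflexivity.
Qed.

Lemma inner_embed N nb G i s u : (i < N)%nat ->
  inner N nb G (embed nb i s u) = u * binner (nb i) (G i) s.
Proof.
  intros Hi. unfold inner. rewrite (fsum_only N _ i Hi).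
  - unfold binner. rewrite (embed_block nb i s u (fun j y => G i j * y)), <- fsum_scal.
    apply fsum_ext. intros. ring.
  - intros i' _ Hi'. apply fsum_zero. intros j _. unfold embed.
    rewrite (proj2 (Nat.eqb_neq i' i) Hi'). simpl. ring.
Qed.

Lemma vnorm_embed N nb i s u : (i < N)%nat ->
  vnorm N nb (embed nb i s u) = Rabs u * bnorm (nb i) s.
Proof.
  intros Hi. unfold vnorm. rewrite (fsum_only N _ i Hi).
  - rewrite <- bnorm_scal. unfold bnorm, bnorm2.
    rewrite (embed_block nb i s u (fun _ y => y ^ 2)). reflexivity.
  - intros i' _ Hi'. apply fsum_zero. intros j _. unfold embed.
    rewrite (proj2 (Nat.eqb_neq i' i) Hi'). simpl. ring.
Qed.

(** * The block descent lemma *)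

Section BlockDescent.

Variables (N : nat) (nb : nat -> nat) (L : nat -> R) (f : Vec -> R) (g : Vec -> Vec).
Hypothesis Hgrad : has_gradient N nb f g.
Hypothesis Hlip : block_lipschitz N nb g L.
Hypothesis HL : forall i, (i < N)%nat -> 0 < L i.

Lemma block_line_derivative x i s t : (i < N)%nat ->
  derivable_pt_lim (fun t => f (block_line nb x i s t)) t
    (binner (nb i) (g (block_line nb x i s t) i) s).
Proof.
  intros Hi eps Heps.
  set (y := block_line nb x i s t).
  set (S := bnorm (nb i) s).
  assert (HS : 0 <= S) by apply sqrt_pos.
  destruct (Hgrad y (eps / (2 * (S + 1)))) as [delta [Hdelta Hy]].
  { apply Rdiv_lt_0_compat; lra. }
  assert (Hdelta' : 0 < delta / (S + 1)) by (apply Rdiv_lt_0_compat; lra).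
  exists (mkposreal _ Hdelta'). simpl. intros h Hh0 Hh.
  assert (Hah : 0 < Rabs h) by (apply Rabs_pos_lt; auto).
  assert (Hsmall : Rabs h * S < delta).
  { apply Rlt_le_trans with (Rabs h * (S + 1)); [nra|].
    apply Rmult_lt_compat_r with (r := S + 1) in Hh; [|lra].
    unfold Rdiv in Hh. rewrite Rmult_assoc, Rinv_l in Hh by lra. lra. }
  specialize (Hy (embed nb i s h)).
  unfold y in Hy. rewrite vnorm_embed, block_line_shift, inner_embed in Hy by auto.
  fold y S in Hy. specialize (Hy Hsmall).
  set (l := binner (nb i) (g y i) s) in *.
  replace ((f (block_line nb x i s (t + h)) - f y) / h - l)
    with ((f (block_line nb x i s (t + h)) - f y - h * l) * / h) by (field; auto).
  rewrite Rabs_mult, Rabs_inv.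
  apply Rle_lt_trans with (eps / (2 * (S + 1)) * S).
  - apply (Rmult_le_reg_r (Rabs h)); auto.
    rewrite Rmult_assoc, Rinv_l by lra. lra.
  - apply (Rmult_lt_reg_r (2 * (S + 1))); [lra|].
    replace (eps / (2 * (S + 1)) * S * (2 * (S + 1))) with (eps * S) by (field; lra).
    nra.
Qed.

Lemma block_slope_increment x i s c : (i < N)%nat -> 0 < c ->
  binner (nb i) (g (block_line nb x i s c) i) s - binner (nb i) (g x i) s
    <= L i * c * bnorm2 (nb i) s.
Proof.
  intros Hi Hc.
  replace (binner (nb i) (g (block_line nb x i s c) i) s - binner (nb i) (g x i) s)
    with (binner (nb i) (bsub (g (block_line nb x i s c) i) (g x i)) s)
    by (unfold binner, bsub; rewrite <- fsum_minus; apply fsum_ext; intros; ring).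
  apply binner_le_of_bnorm_le; [specialize (HL i Hi); nra|].
  rewrite Rmult_assoc.
  replace (c * bnorm (nb i) s) with (bnorm (nb i) (fun j => c * s j))
    by (rewrite bnorm_scal, Rabs_pos_eq; lra).
  exact (Hlip i x _ Hi).
Qed.

(* Descent lemma: f(x + U_i s) <= f(x) + <grad_i f(x), s> + L_i/2 ||s||^2.
   Mean value theorem for f(x + t U_i s) minus the quadratic model in t. *)
Lemma block_descent x i s : (i < N)%nat ->
  f (upd nb x i s) <= f x + binner (nb i) (g x i) s + L i / 2 * bnorm2 (nb i) s.
Proof.
  intros Hi.
  set (B := bnorm2 (nb i) s). set (l0 := binner (nb i) (g x i) s).
  destruct (MVT_cor2 (fun t => f (block_line nb x i s t) - (l0 * t + L i / 2 * B * t ^ 2))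
              (fun t => binner (nb i) (g (block_line nb x i s t) i) s
                        - (l0 + 2 * (L i / 2 * B) * t)) 0 1)
    as [c [Hmvt Hc]]; [lra| |].
  - intros c _.
    apply (derivable_pt_lim_minus (fun t => f (block_line nb x i s t))
             (fun t => l0 * t + L i / 2 * B * t ^ 2)).
    { apply block_line_derivative; auto. }
    replace (l0 + 2 * (L i / 2 * B) * c)
      with (l0 * 1 + L i / 2 * B * (INR 2 * c ^ (2 - 1))) by (simpl; ring).
    apply (derivable_pt_lim_plus (fun t => l0 * t) (fun t => L i / 2 * B * t ^ 2)).
    + apply (derivable_pt_lim_scal id), derivable_pt_lim_id.
    + apply (derivable_pt_lim_scal (fun t => t ^ 2)), derivable_pt_lim_pow.
  - rewrite block_line_1, block_line_0 in Hmvt.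
    pose proof (block_slope_increment x i s c Hi (proj1 Hc)) as Hslope.
    fold B l0 in Hslope. simpl in Hmvt. nra.
Qed.

End BlockDescent.

Lemma hsum_upd N nb hb x i s : (i < N)%nat -> block_fun (nb i) (hb i) ->
  hsum N hb (upd nb x i s) = hsum N hb x - hb i (x i) + hb i (fun j => x i j + s j).
Proof.
  intros Hi Hfun. unfold hsum. rewrite (fsum_update N _ (fun i' => hb i' (x i')) i Hi).
  - f_equal. apply Hfun. intros j Hj. unfold upd.
    rewrite Nat.eqb_refl, (proj2 (Nat.ltb_lt j (nb i)) Hj). reflexivity.
  - intros i' _ Hi'. f_equal. apply functional_extensionality; intro j. unfold upd.
    rewrite (proj2 (Nat.eqb_neq i' i) Hi'). reflexivity.
Qed.

Definition vscale (t : R) (d : Vec) : Vec := fun i j => t * d i j.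

Lemma inner_vscale N nb G t d : inner N nb G (vscale t d) = t * inner N nb G d.
Proof.
  unfold inner, binner, vscale. rewrite <- fsum_scal. apply fsum_ext; intros.
  rewrite <- fsum_scal. apply fsum_ext; intros. ring.
Qed.

Lemma Lnorm2_vscale N nb L t d : Lnorm2 N nb L (vscale t d) = t ^ 2 * Lnorm2 N nb L d.
Proof.
  unfold Lnorm2, vscale. rewrite <- fsum_scal. apply fsum_ext; intros.
  rewrite bnorm2_scal. ring.
Qed.

Lemma Lnorm2_nonneg N nb L d : (forall i, (i < N)%nat -> 0 < L i) -> 0 <= Lnorm2 N nb L d.
Proof.
  intros HL. apply fsum_nonneg. intros i Hi.
  pose proof (HL i Hi). pose proof (bnorm2_nonneg (nb i) (d i)). nra.
Qed.

Lemma hsum_vscale_convex N nb hb x d t :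
  (forall i, (i < N)%nat -> convex_on (nb i) (hb i)) -> 0 <= t <= 1 ->
  hsum N hb (vadd x (vscale t d)) <= t * hsum N hb (vadd x d) + (1 - t) * hsum N hb x.
Proof.
  intros Hconv Ht. unfold hsum. rewrite <- !fsum_scal, <- fsum_plus.
  apply fsum_le. intros i Hi.
  replace (vadd x (vscale t d) i) with (bcomb t (vadd x d i) (x i)).
  - apply Hconv; auto.
  - unfold bcomb, vadd, vscale. apply functional_extensionality; intro j. ring.
Qed.

Lemma quadratic_min_at_one A B : 0 <= B ->
  (forall t, 0 <= t <= 1 -> A + B / 2 <= t * A + t ^ 2 * B / 2) -> A + B <= 0.
Proof.
  intros HB Hmin.
  (* with t = 1 - u:  u (A + B) <= u^2 B / 2, i.e. A + B <= u B / 2 for u in (0,1] *)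
  assert (Hu : forall u, 0 < u <= 1 -> A + B <= u * B / 2).
  { intros u Hu. specialize (Hmin (1 - u) ltac:(lra)).
    apply (Rmult_le_reg_l u); [lra|]. nra. }
  destruct (Rle_or_lt (A + B) 0) as [Hle|Hpos]; [exact Hle|exfalso].
  set (u := Rmin 1 ((A + B) / (B + 1))).
  assert (Hu_pos : 0 < u) by (apply Rmin_glb_lt; [lra | apply Rdiv_lt_0_compat; lra]).
  assert (Hu_le : u <= (A + B) / (B + 1)) by apply Rmin_r.
  specialize (Hu u (conj Hu_pos (Rmin_l _ _))).
  assert (Hfrac : (A + B) / (B + 1) * B < A + B).
  { apply (Rmult_lt_reg_r (B + 1)); [lra|].
    replace ((A + B) / (B + 1) * B * (B + 1)) with ((A + B) * B) by (field; lra). nra. }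
  nra.
Qed.

Lemma full_model_opt_bound N nb f g hb L x d :
  (forall i, (i < N)%nat -> 0 < L i) ->
  (forall i, (i < N)%nat -> convex_on (nb i) (hb i)) ->
  (forall s, full_model N nb f g (hsum N hb) L x d <= full_model N nb f g (hsum N hb) L x s) ->
  inner N nb (g x) d + hsum N hb (vadd x d) - hsum N hb x + Lnorm2 N nb L d <= 0.
Proof.
  intros HL Hconv Hopt.
  apply (quadratic_min_at_one _ (Lnorm2 N nb L d)); [apply Lnorm2_nonneg; auto|].
  intros t Ht. specialize (Hopt (vscale t d)). unfold full_model in Hopt.
  rewrite inner_vscale, Lnorm2_vscale in Hopt.
  pose proof (hsum_vscale_convex N nb hb x d t Hconv Ht). lra.
Qed.

Lemma M1_sq N nb L dL x : (forall i, (i < N)%nat -> 0 < L i) ->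
  M1 N nb L dL x ^ 2 = Lnorm2 N nb L (dL x).
Proof.
  intros HL. unfold M1, Ldualnorm, DL.
  replace (fsum N (fun i => / L i * bnorm2 (nb i) (fun j => L i * dL x i j)))
    with (Lnorm2 N nb L (dL x)).
  - apply pow2_sqrt, Lnorm2_nonneg; auto.
  - unfold Lnorm2. apply fsum_ext. intros i Hi. rewrite bnorm2_scal.
    specialize (HL i Hi). field. lra.
Qed.

(** * One step of 1-RCD, averaged over the block index *)

Definition objective (N : nat) (f : Vec -> R) (hb : nat -> BVec -> R) (x : Vec) : R :=
  f x + hsum N hb x.

Section OneStep.

Variables (N : nat) (nb : nat -> nat) (L : nat -> R)
  (f : Vec -> R) (g : Vec -> Vec) (hb : nat -> BVec -> R)
  (D : Vec -> nat -> BVec) (dL : Vec -> Vec).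
Hypothesis HN : (0 < N)%nat.
Hypothesis HL : forall i, (i < N)%nat -> 0 < L i.
Hypothesis Hgrad : has_gradient N nb f g.
Hypothesis Hlip : block_lipschitz N nb g L.
Hypothesis Hhfun : forall i, (i < N)%nat -> block_fun (nb i) (hb i).
Hypothesis Hhconv : forall i, (i < N)%nat -> convex_on (nb i) (hb i).
Hypothesis HD : forall x i, (i < N)%nat -> forall s : BVec,
  block_model nb f g (hsum N hb) L x i (D x i) <= block_model nb f g (hsum N hb) L x i s.
Hypothesis HdL : forall x (s : Vec),
  full_model N nb f g (hsum N hb) L x (dL x) <= full_model N nb f g (hsum N hb) L x s.

(* The step along block i does at least as well as the block model at any s:
   the descent lemma bounds F by the model at D x i, which is minimal. *)
Lemma block_step_bound x i s : (i < N)%nat ->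
  objective N f hb (upd nb x i (D x i))
    <= objective N f hb x + binner (nb i) (g x i) s + L i / 2 * bnorm2 (nb i) s
       + (hb i (fun j => x i j + s j) - hb i (x i)).
Proof.
  intros Hi.
  pose proof (block_descent N nb L f g Hgrad Hlip HL x i (D x i) Hi) as Hdesc.
  pose proof (HD x i Hi s) as Hmodel. unfold block_model in Hmodel.
  rewrite !(hsum_upd N nb hb x i) in Hmodel by auto.
  unfold objective. rewrite (hsum_upd N nb hb x i) by auto. lra.
Qed.

(* Summing over i with s = d_L(x)_i and using the optimality of d_L(x):
   sum_i F(x + U_i D_i(x)) <= N F(x) - ||d_L(x)||_L^2 / 2. *)
Lemma rcd_sum_decrease x :
  fsum N (fun i => objective N f hb (upd nb x i (D x i)))
    <= INR N * objective N f hb x - / 2 * Lnorm2 N nb L (dL x).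
Proof.
  set (d := dL x).
  pose proof (full_model_opt_bound N nb f g hb L x d HL Hhconv (HdL x)) as Hopt.
  apply Rle_trans with (fsum N (fun i => objective N f hb x
     + binner (nb i) (g x i) (d i) + L i / 2 * bnorm2 (nb i) (d i)
     + (hb i (vadd x d i) - hb i (x i)))).
  - apply fsum_le. intros i Hi. apply block_step_bound; auto.
  - rewrite !fsum_plus, fsum_minus, fsum_const.
    replace (fsum N (fun i => L i / 2 * bnorm2 (nb i) (d i))) with (/ 2 * Lnorm2 N nb L d)
      by (unfold Lnorm2; rewrite <- fsum_scal; apply fsum_ext; intros; field).
    fold (inner N nb (g x) d) (hsum N hb (vadd x d)) (hsum N hb x). lra.
Qed.

Lemma rcd_average_decrease x :
  / INR N * fsum N (fun i => objective N f hb (upd nb x i (D x i)))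
    <= objective N f hb x - M1 N nb L dL x ^ 2 / (2 * INR N).
Proof.
  assert (HN' : 0 < INR N) by (apply lt_0_INR; auto).
  rewrite M1_sq by auto.
  apply Rle_trans with (/ INR N * (INR N * objective N f hb x - / 2 * Lnorm2 N nb L (dL x))).
  - apply Rmult_le_compat_l; [left; apply Rinv_0_lt_compat; auto | apply rcd_sum_decrease].
  - right. field. lra.
Qed.

End OneStep.

(** * Expectations over uniform index sequences *)

Lemma expect_unif_lower N l G c : (0 < N)%nat ->
  (forall w, c <= G w) -> c <= expect_unif N l G.
Proof.
  intros HN. revert G. induction l as [|l IH]; intros G HG; simpl; auto.
  assert (HN' : 0 < INR N) by (apply lt_0_INR; auto).
  apply Rle_trans with (/ INR N * (INR N * c)); [right; field; lra|].
  apply Rmult_le_compat_l; [left; apply Rinv_0_lt_compat; auto|].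
  rewrite <- fsum_const. apply fsum_le. intros. apply IH. intros; apply HG.
Qed.

Lemma expect_run_descent N nb D (Phi Psi : Vec -> R) c :
  (0 < N)%nat ->
  (forall x, / INR N * fsum N (fun i => Phi (upd nb x i (D x i))) <= Phi x - Psi x / c) ->
  forall l x,
    expect_unif N (S l) (fun w => Phi (rcd_run nb D x w))
      <= expect_unif N l (fun w => Phi (rcd_run nb D x w))
         - expect_unif N l (fun w => Psi (rcd_run nb D x w)) / c.
Proof.
  intros HN Hstep l. induction l as [|l IH]; intros x.
  - exact (Hstep x).
  - cbn [expect_unif rcd_run].
    assert (HN' : 0 < INR N) by (apply lt_0_INR; auto).
    set (y := fun i => upd nb x i (D x i)).
    apply Rle_trans with (/ INR N * fsum N (fun i =>
        expect_unif N l (fun r => Phi (rcd_run nb D (y i) r))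
        - expect_unif N l (fun r => Psi (rcd_run nb D (y i) r)) / c)).
    + apply Rmult_le_compat_l; [left; apply Rinv_0_lt_compat; auto|].
      apply fsum_le. intros i _. apply IH.
    + right. rewrite fsum_minus, fsum_div. unfold y, Rdiv. ring.
Qed.

Lemma argmin_exists (b : nat -> R) k :
  exists l, (l <= k)%nat /\ forall l', (l' <= k)%nat -> b l <= b l'.
Proof.
  induction k as [|k [l [Hl Hmin]]].
  - exists 0%nat. split; auto. intros l' Hl'. replace l' with 0%nat by lia. lra.
  - destruct (Rle_or_lt (b l) (b (S k))) as [Hle|Hlt].
    + exists l. split; [lia|]. intros l' Hl'.
      destruct (Nat.eq_dec l' (S k)) as [->|]; [auto | apply Hmin; lia].
    + exists (S k). split; [lia|]. intros l' Hl'.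
      destruct (Nat.eq_dec l' (S k)) as [->|]; [lra|].
      pose proof (Hmin l' ltac:(lia)). lra.
Qed.

Lemma descent_telescope (a b : nat -> R) c :
  (forall l, a (S l) <= a l - b l / c) -> forall k, fsum k b / c <= a 0%nat - a k.
Proof.
  intros Hdesc k. induction k as [|k IH]; simpl; [unfold Rdiv; lra|].
  specialize (Hdesc k). unfold Rdiv in *. lra.
Qed.

Lemma descent_min_bound (a b : nat -> R) (c m : R) k : 0 < c ->
  (forall l, a (S l) <= a l - b l / c) -> m <= a (S k) ->
  exists l, (l <= k)%nat /\ b l <= c * (a 0%nat - m) / INR (k + 1).
Proof.
  intros Hc Hdesc Hm.
  destruct (argmin_exists b k) as [l [Hl Hmin]].
  exists l. split; auto.
  assert (Havg : INR (S k) * b l <= fsum (S k) b).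
  { rewrite <- fsum_const. apply fsum_le. intros. apply Hmin. lia. }
  pose proof (descent_telescope a b c Hdesc (S k)) as Htel.
  assert (Hsum : fsum (S k) b <= c * (a 0%nat - m)).
  { apply (Rmult_le_reg_r (/ c)); [apply Rinv_0_lt_compat; auto|].
    replace (c * (a 0%nat - m) * / c) with (a 0%nat - m) by (field; lra).
    unfold Rdiv in Htel. lra. }
  replace (k + 1)%nat with (S k) by lia.
  assert (HK : 0 < INR (S k)) by (apply lt_0_INR; lia).
  apply (Rmult_le_reg_l (INR (S k))); auto.
  replace (INR (S k) * (c * (a 0%nat - m) / INR (S k))) with (c * (a 0%nat - m))
    by (field; lra).
  lra.
Qed.

Theorem theorem2
  (N : nat) (nb : nat -> nat) (L : nat -> R)
  (f : Vec -> R) (g : Vec -> Vec) (hb : nat -> BVec -> R)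
  (Fstar : R) (x0 : Vec)
  (D : Vec -> nat -> BVec) (dL : Vec -> Vec)
  (HN : (0 < N)%nat)
  (Hnb : forall i, (i < N)%nat -> (0 < nb i)%nat)
  (HL : forall i, (i < N)%nat -> 0 < L i)
  (Hgrad : has_gradient N nb f g)
  (Hlip : block_lipschitz N nb g L)
  (Hhfun : forall i, (i < N)%nat -> block_fun (nb i) (hb i))
  (Hhconv : forall i, (i < N)%nat -> convex_on (nb i) (hb i))
  (Hhcont : forall i, (i < N)%nat -> continuous_on (nb i) (hb i))
  (HFlow : forall x, Fstar <= f x + hsum N hb x)
  (HFinf : forall eps, 0 < eps -> exists x, f x + hsum N hb x < Fstar + eps)
  (HD : forall x i, (i < N)%nat -> forall s : BVec,
      block_model nb f g (hsum N hb) L x i (D x i)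
        <= block_model nb f g (hsum N hb) L x i s)
  (HdL : forall x (s : Vec),
      full_model N nb f g (hsum N hb) L x (dL x)
        <= full_model N nb f g (hsum N hb) L x s) :
  forall k : nat, exists l : nat, (l <= k)%nat /\
    expect_unif N l (fun w => (M1 N nb L dL (rcd_run nb D x0 w)) ^ 2)
      <= 2 * INR N * (f x0 + hsum N hb x0 - Fstar) / INR (k + 1).
Proof.
  intros k.
  set (F := objective N f hb).
  set (a := fun l => expect_unif N l (fun w => F (rcd_run nb D x0 w))).
  set (b := fun l => expect_unif N l (fun w => M1 N nb L dL (rcd_run nb D x0 w) ^ 2)).
  assert (Hdesc : forall l, a (S l) <= a l - b l / (2 * INR N)).
  { intros l. apply (expect_run_descent N nb D F (fun x => M1 N nb L dL x ^ 2)); auto.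
    intros x. apply (rcd_average_decrease N nb L f g hb D dL); auto. }
  assert (Hlow : Fstar <= a (S k)) by (apply expect_unif_lower; [exact HN | intros; apply HFlow]).
  assert (HN2 : 0 < 2 * INR N) by (apply lt_0_INR in HN; lra).
  exact (descent_min_bound a b (2 * INR N) Fstar k HN2 Hdesc Hlow).
Qed.
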